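(* Let $V$ be a real vector space with inner products $\langle\cdot,\cdot\rangle_1,\langle\cdot,\cdot\rangle_2$ and induced norms $\|\cdot\|_1,\|\cdot\|_2$. The following are equivalent: (1) there is $c>0$ with $\langle\cdot,\cdot\rangle_2=c\langle\cdot,\cdot\rangle_1$; (2) there is $c>0$ with $\|\cdot\|_2=c\|\cdot\|_1$; (3) for all nonzero $x,y\in V$, the angle between $x$ and $y$ with respect to $\langle\cdot,\cdot\rangle_1$ equals that with respect to $\langle\cdot,\cdot\rangle_2$; (4) for all nonzero $x,y\in V$, $\langle x,y\rangle_1=0$ if and only if $\langle x,y\rangle_2=0$; (5) there exists $\theta_0\in(0,\pi)$ such that for all nonzero $x,y\in V$, the angle between $x$ and $y$ with respect to $\langle\cdot,\cdot\rangle_1$ is $\theta_0$ if and only if the angle between them with respect to $\langle\cdot,\cdot\rangle_2$ is $\theta_0$.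
   Context: For an inner product $\langle\cdot,\cdot\rangle$ on a real vector space with norm $\|x\|=\sqrt{\langle x,x\rangle}$, the angle between nonzero vectors $x,y$ is the unique $\theta\in[0,\pi]$ with $\cos\theta=\langle x,y\rangle/(\|x\|\|y\|)$. *)

From mathcomp Require Import all_boot all_order all_algebra.
From mathcomp Require Import all_classical all_reals all_analysis.
Set Implicit Arguments. Unset Strict Implicit. Unset Printing Implicit Defensive.
Import Order.TTheory GRing.Theory Num.Theory.
Local Open Scope ring_scope.

Definition is_inner_product (R : realType) (V : lmodType R) (ip : V -> V -> R) : Prop :=
  [/\ (forall (a : R) (x y z : V), ip (a *: x + y) z = a * ip x z + ip y z),
      (forall x y : V, ip x y = ip y x)
    & (forall x : V, x != 0 -> 0 < ip x x)].

Definition ipnorm (R : realType) (V : lmodType R) (ip : V -> V -> R) (x : V) : R :=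
  Num.sqrt (ip x x).

Definition ipangle (R : realType) (V : lmodType R) (ip : V -> V -> R) (x y : V) : R :=
  acos (ip x y / (ipnorm ip x * ipnorm ip y)).

From mathcomp Require Import all_boot all_order all_algebra.
From mathcomp Require Import all_classical all_reals all_analysis.
From mathcomp Require Import ring lra.
Import Order.TTheory GRing.Theory Num.Theory.
Set Implicit Arguments. Unset Strict Implicit.
Local Open Scope ring_scope.

(* If orthogonality for ip1 implies orthogonality for ip2, then projecting x
   onto e along the ip1-orthogonal complement of e gives
   ip2 x e = k(e) ip1 x e with k(e) = ip2 e e / ip1 e e, and comparing
   k(e), k(f), k(e + f) shows that k is constant; all other conditions
   reduce to this one.  For a preserved angle th in (0, pi) with
   t = cos th != 0 and x ip1-orthogonal to e, the vectors
   t |x| e +- sqrt(1 - t^2) |e| x both make the angle th with e for ip1,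
   hence for ip2, and the two resulting quadratic identities force
   ip2 x e = 0. *)

Section InnerProduct.
Variables (R : realType) (V : lmodType R) (ip : V -> V -> R).
Hypothesis ipP : is_inner_product ip.

Lemma ipDl x y z : ip (x + y) z = ip x z + ip y z.
Proof. by case: ipP => lin _ _; rewrite -[x in ip (x + _)]scale1r lin mul1r. Qed.

Lemma ip0l z : ip 0 z = 0.
Proof. by apply: (addrI (ip 0 z)); rewrite -ipDl !addr0. Qed.

Lemma ipZl a x z : ip (a *: x) z = a * ip x z.
Proof. by case: ipP => lin _ _; rewrite -[a *: x]addr0 lin ip0l addr0. Qed.

Lemma ipC x y : ip x y = ip y x.
Proof. by case: ipP. Qed.

Lemma ipDr x y z : ip z (x + y) = ip z x + ip z y.
Proof. by rewrite ipC ipDl !(ipC z). Qed.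

Lemma ipZr a x z : ip z (a *: x) = a * ip z x.
Proof. by rewrite ipC ipZl ipC. Qed.

Lemma ip0r z : ip z 0 = 0.
Proof. by rewrite ipC ip0l. Qed.

Lemma ipxx_gt0 x : x != 0 -> 0 < ip x x.
Proof. by case: ipP => _ _; apply. Qed.

Lemma ipxx_ge0 x : 0 <= ip x x.
Proof. by have [->|/ipxx_gt0/ltW//] := eqVneq x 0; rewrite ip0l. Qed.

Lemma ipxx_eq0 x : (ip x x == 0) = (x == 0).
Proof. by have [->|/ipxx_gt0/gt_eqF//] := eqVneq x 0; rewrite ip0l eqxx. Qed.

Lemma ipnorm_sqr x : ipnorm ip x ^+ 2 = ip x x.
Proof. by rewrite sqr_sqrtr // ipxx_ge0. Qed.

Lemma ipnorm_gt0 x : x != 0 -> 0 < ipnorm ip x.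
Proof. by move=> /ipxx_gt0 ?; rewrite sqrtr_gt0. Qed.

Lemma ip_CauchySchwarz x y : ip x y ^+ 2 <= ip x x * ip y y.
Proof.
have [->|y_neq0] := eqVneq y 0; first by rewrite !ip0r expr0n /= mulr0.
have yy_gt0 := ipxx_gt0 y_neq0.
pose l := ip x y / ip y y.
have expand : ip (x - l *: y) (x - l *: y) = ip x x - ip x y ^+ 2 / ip y y.
  rewrite -scaleNr ipDl !ipDr !(ipZl, ipZr) (ipC y x) /l.
  by field; rewrite gt_eqF.
by have := ipxx_ge0 (x - l *: y); rewrite expand subr_ge0 ler_pdivrMr.
Qed.

Definition ipcos x y := ip x y / (ipnorm ip x * ipnorm ip y).

Lemma ipcos_in_itv x y : ipcos x y \in `[-1, 1].
Proof.
rewrite in_itv /=.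
have [->|x_neq0] := eqVneq x 0; first by rewrite /ipcos ip0l mul0r; lra.
have [->|y_neq0] := eqVneq y 0; first by rewrite /ipcos ip0r mul0r; lra.
have n_gt0 : 0 < ipnorm ip x * ipnorm ip y by rewrite mulr_gt0 ?ipnorm_gt0.
rewrite -ler_norml normrM normfV (gtr0_norm n_gt0) ler_pdivrMr // mul1r.
rewrite -(ler_pXn2r (n := 2)) ?nnegrE ?normr_ge0 ?(ltW n_gt0) //.
by rewrite real_normK ?num_real // exprMn !ipnorm_sqr ip_CauchySchwarz.
Qed.

Lemma cos_ipangle x y : cos (ipangle ip x y) = ipcos x y.
Proof. by rewrite /ipangle acosK // ipcos_in_itv. Qed.

Lemma ipangle_eqE x y t : 0 <= t <= pi -> (ipangle ip x y = t <-> ipcos x y = cos t).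
Proof.
move=> t_in; split=> [<-|E]; first by rewrite cos_ipangle.
by rewrite /ipangle -/(ipcos x y) E cosK // in_itv.
Qed.

Lemma ipcos_eq0 x y : x != 0 -> y != 0 -> (ipcos x y = 0 <-> ip x y = 0).
Proof.
move=> x_neq0 y_neq0; rewrite /ipcos; split=> [/eqP|->]; last by rewrite mul0r.
rewrite mulf_eq0 invr_eq0 mulf_eq0.
by rewrite (gt_eqF (ipnorm_gt0 x_neq0)) (gt_eqF (ipnorm_gt0 y_neq0)) !orbF => /eqP.
Qed.

Lemma ipcos_sqr x y : ip x y ^+ 2 = ipcos x y ^+ 2 * ip x x * ip y y.
Proof.
have [->|x_neq0] := eqVneq x 0; first by rewrite !ip0l expr0n /= !(mulr0, mul0r).
have [->|y_neq0] := eqVneq y 0; first by rewrite !ip0r expr0n /= !mulr0.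
rewrite -!ipnorm_sqr /ipcos; field.
by rewrite !gt_eqF ?ipnorm_gt0.
Qed.

(* For [x] orthogonal to [e], this combination has [e]-component [t |x||e|] and
   norm [|x||e|], so its cosine with [e] is [t]. *)
Lemma ipcos_orthogonal_comb x e t s : ip x e = 0 -> x != 0 -> e != 0 ->
    s ^+ 2 = (1 - t ^+ 2) * ip e e ->
  let w := (t * ipnorm ip x) *: e + s *: x in w != 0 /\ ipcos w e = t.
Proof.
move=> xe0 x_neq0 e_neq0 s2 w.
have a_gt0 := ipnorm_gt0 x_neq0; have b_gt0 := ipnorm_gt0 e_neq0.
have we : ip w e = t * (ipnorm ip x * ipnorm ip e ^+ 2).
  by rewrite ipDl !ipZl xe0 mulr0 addr0 ipnorm_sqr mulrA.
have ww : ip w w = (ipnorm ip x * ipnorm ip e) ^+ 2.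
  have -> : ip w w = (t * ipnorm ip x) ^+ 2 * ip e e + s ^+ 2 * ip x x.
    by rewrite !(ipDl, ipDr, ipZl, ipZr) (ipC e x) xe0; ring.
  by rewrite s2 -!ipnorm_sqr; ring.
have nw : ipnorm ip w = ipnorm ip x * ipnorm ip e.
  by rewrite /ipnorm ww sqrtr_sqr gtr0_norm ?mulr_gt0.
split; first by rewrite -ipxx_eq0 ww sqrf_eq0 mulf_neq0 ?gt_eqF.
by rewrite /ipcos we nw; field; rewrite !gt_eqF.
Qed.

End InnerProduct.

Arguments ipcos {R V} ip x y.

Section TwoInnerProducts.
Variables (R : realType) (V : lmodType R) (ip1 ip2 : V -> V -> R).
Hypotheses (ip1P : is_inner_product ip1) (ip2P : is_inner_product ip2).

Lemma ipnorm_scaled c : 0 < c -> (forall x y, ip2 x y = c * ip1 x y) ->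
  forall x, ipnorm ip2 x = Num.sqrt c * ipnorm ip1 x.
Proof. by move=> c_gt0 ip2E x; rewrite /ipnorm ip2E sqrtrM ?ltW. Qed.

Lemma ip_scaled_of_ipnorm c : (forall x, ipnorm ip2 x = c * ipnorm ip1 x) ->
  forall x y, ip2 x y = c ^+ 2 * ip1 x y.
Proof.
move=> ipnorm2E.
have sqE z : ip2 z z = c ^+ 2 * ip1 z z.
  by rewrite -(ipnorm_sqr ip2P) -(ipnorm_sqr ip1P) ipnorm2E exprMn.
move=> x y; have := sqE (x + y).
rewrite !(ipDl ip1P, ipDl ip2P, ipDr ip1P, ipDr ip2P).
by rewrite (ipC ip1P y x) (ipC ip2P y x) !sqE => ?; lra.
Qed.

Lemma ipcos_scaled c : 0 < c -> (forall x y, ip2 x y = c * ip1 x y) ->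
  forall x y, ipcos ip2 x y = ipcos ip1 x y.
Proof.
move=> c_gt0 ip2E x y; rewrite /ipcos ip2E !(ipnorm_scaled c_gt0 ip2E).
have -> : Num.sqrt c * ipnorm ip1 x * (Num.sqrt c * ipnorm ip1 y)
          = c * (ipnorm ip1 x * ipnorm ip1 y).
  by rewrite mulrACA -expr2 sqr_sqrtr ?ltW.
by rewrite invfM mulrACA mulfV ?gt_eqF // mul1r.
Qed.

Lemma ipangle_eq_ipcos x y :
  ipangle ip1 x y = ipangle ip2 x y <-> ipcos ip1 x y = ipcos ip2 x y.
Proof.
split=> [E|E]; last by rewrite /ipangle -/(ipcos ip1 x y) E.
by rewrite -(cos_ipangle ip1P) -(cos_ipangle ip2P) E.
Qed.

Lemma ip_proportional_of_orthogonal e : e != 0 ->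
    (forall x, ip1 x e = 0 -> ip2 x e = 0) ->
  forall x, ip2 x e = ip2 e e / ip1 e e * ip1 x e.
Proof.
move=> e_neq0 orth x; have ee_gt0 := ipxx_gt0 ip1P e_neq0.
pose l := ip1 x e / ip1 e e.
have /orth : ip1 (x - l *: e) e = 0.
  by rewrite (ipDl ip1P) -scaleNr (ipZl ip1P) /l; field; rewrite gt_eqF.
rewrite (ipDl ip2P) -scaleNr (ipZl ip2P) => /eqP; rewrite addr_eq0 mulNr opprK.
by move=> /eqP->; rewrite /l; field; rewrite gt_eqF.
Qed.

(* The factor [ip2 e e / ip1 e e] is the same for all [e != 0]: directly when
   [ip1 e f != 0], and through [e + f] when [e] and [f] are orthogonal. *)
Lemma ip_scaled_of_orthogonal :
    (forall x e, x != 0 -> e != 0 -> ip1 x e = 0 -> ip2 x e = 0) ->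
  exists c, 0 < c /\ forall x y, ip2 x y = c * ip1 x y.
Proof.
move=> orth; pose k e := ip2 e e / ip1 e e.
have ip2E e x : e != 0 -> ip2 x e = k e * ip1 x e.
  move=> e_neq0; apply: ip_proportional_of_orthogonal => // y.
  by have [->|/orth] := eqVneq y 0; [rewrite (ip0l ip2P)|apply].
have k_nonorth e f : e != 0 -> f != 0 -> ip1 e f != 0 -> k e = k f.
  move=> e_neq0 f_neq0 ef_neq0; apply: (mulIf ef_neq0).
  by rewrite -ip2E // (ipC ip2P) ip2E // (ipC ip1P).
have k_const e f : e != 0 -> f != 0 -> k e = k f.
  move=> e_neq0 f_neq0; have [ef0|] := eqVneq (ip1 e f) 0; last exact: k_nonorth.
  have e_ef : ip1 e (e + f) = ip1 e e by rewrite (ipDr ip1P) ef0 addr0.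
  have f_ef : ip1 f (e + f) = ip1 f f by rewrite (ipDr ip1P) (ipC ip1P f) ef0 add0r.
  have ef_neq0 : e + f != 0.
    by rewrite -(ipxx_eq0 ip1P) (ipDl ip1P) e_ef f_ef gt_eqF // addr_gt0 ?ipxx_gt0.
  rewrite (k_nonorth e (e + f)) ?e_ef ?(ipxx_eq0 ip1P) //.
  by rewrite (k_nonorth f (e + f)) ?f_ef ?(ipxx_eq0 ip1P).
have [[e e_neq0]|V0] := pselect (exists e : V, e != 0).
  exists (k e); split; first by rewrite divr_gt0 ?ipxx_gt0.
  move=> x y; have [->|y_neq0] := eqVneq y 0.
    by rewrite (ip0r ip1P) (ip0r ip2P) mulr0.
  by rewrite ip2E // (k_const y e).
exists 1; split=> // x y; have [->|x_neq0] := eqVneq x 0; last by case: V0; exists x.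
by rewrite (ip0l ip1P) (ip0l ip2P) mulr0.
Qed.

(* Apply [ipcos_orthogonal_comb] with [s] and [-s]: the difference of the two
   squared cosine identities for [ip2] is a nonzero multiple of [ip2 x e]. *)
Lemma orthogonal_of_ipcos_preserved t : t != 0 -> 0 < 1 - t ^+ 2 ->
    (forall w e, w != 0 -> e != 0 -> ipcos ip1 w e = t -> ipcos ip2 w e = t) ->
  forall x e, x != 0 -> e != 0 -> ip1 x e = 0 -> ip2 x e = 0.
Proof.
move=> t_neq0 sin2_gt0 keep x e x_neq0 e_neq0 xe0.
pose a := t * ipnorm ip1 x; pose s := Num.sqrt ((1 - t ^+ 2) * ip1 e e).
have ee_gt0 := ipxx_gt0 ip1P e_neq0; have ee2_gt0 := ipxx_gt0 ip2P e_neq0.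
have s_gt0 : 0 < s by rewrite sqrtr_gt0 mulr_gt0.
have cos_eq u : u ^+ 2 = (1 - t ^+ 2) * ip1 e e ->
    (a * ip2 e e + u * ip2 x e) ^+ 2
    = t ^+ 2 * (a ^+ 2 * ip2 e e + (a * u) *+ 2 * ip2 x e + u ^+ 2 * ip2 x x)
      * ip2 e e.
  move=> u2; have [w_neq0 cos1] := ipcos_orthogonal_comb ip1P xe0 x_neq0 e_neq0 u2.
  have := ipcos_sqr ip2P (a *: e + u *: x) e.
  rewrite (keep _ _ w_neq0 e_neq0 cos1).
  by rewrite !(ipDl ip2P, ipDr ip2P, ipZl ip2P, ipZr ip2P) (ipC ip2P e x) => ->; ring.
have s2 : s ^+ 2 = (1 - t ^+ 2) * ip1 e e by rewrite sqr_sqrtr ?mulr_ge0 ?ltW.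
have /eqP : 4 * a * s * ip2 e e * (1 - t ^+ 2) * ip2 x e = 0.
  have := cos_eq _ s2; have := cos_eq (- s); rewrite sqrrN => /(_ s2).
  by move=> Em Ep; apply/eqP; rewrite -subr_eq0; apply/eqP; lra.
rewrite !mulf_eq0 pnatr_eq0 (negbTE t_neq0) (gt_eqF (ipnorm_gt0 ip1P x_neq0)).
by rewrite (gt_eqF s_gt0) (gt_eqF ee2_gt0) (gt_eqF sin2_gt0) => /eqP.
Qed.

Lemma ipangle_scaled c : 0 < c -> (forall x y, ip2 x y = c * ip1 x y) ->
  forall x y, ipangle ip1 x y = ipangle ip2 x y.
Proof.
by move=> c_gt0 ip2E x y; apply/ipangle_eq_ipcos; rewrite (ipcos_scaled c_gt0 ip2E).
Qed.

Lemma orthogonal_iff_of_ipangle_eq x y : x != 0 -> y != 0 ->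
  ipangle ip1 x y = ipangle ip2 x y -> (ip1 x y = 0 <-> ip2 x y = 0).
Proof.
move=> x_neq0 y_neq0 /ipangle_eq_ipcos cosE.
by rewrite -(ipcos_eq0 ip1P x_neq0 y_neq0) -(ipcos_eq0 ip2P x_neq0 y_neq0) cosE.
Qed.

Lemma ip_scaled_of_ipangle_preserved th : 0 < th < pi ->
    (forall x y, x != 0 -> y != 0 ->
       (ipangle ip1 x y = th <-> ipangle ip2 x y = th)) ->
  exists c, 0 < c /\ forall x y, ip2 x y = c * ip1 x y.
Proof.
move=> /andP[th_gt0 th_ltpi] same_th; have th_in : 0 <= th <= pi by rewrite !ltW.
have same_cos w f : w != 0 -> f != 0 ->
    ipcos ip1 w f = cos th -> ipcos ip2 w f = cos th.
  move=> w_neq0 f_neq0 /(ipangle_eqE ip1P _ _ th_in).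
  by move=> /(same_th _ _ w_neq0 f_neq0)/(ipangle_eqE ip2P _ _ th_in).
apply: ip_scaled_of_orthogonal; have [cos0|cos_neq0] := eqVneq (cos th) 0.
  move=> x e x_neq0 e_neq0 /(ipcos_eq0 ip1P x_neq0 e_neq0) xe0.
  by apply/(ipcos_eq0 ip2P x_neq0 e_neq0); rewrite -cos0 same_cos // cos0.
apply: (orthogonal_of_ipcos_preserved cos_neq0 _ same_cos).
by rewrite -sin2cos2 exprn_gt0 // sin_gt0_pi ?th_gt0.
Qed.

End TwoInnerProducts.

Unset Implicit Arguments. Set Strict Implicit.

Theorem mainTheorem6 (R : realType) (V : lmodType R) (ip1 ip2 : V -> V -> R)
  (h1 : is_inner_product ip1) (h2 : is_inner_product ip2) :
  [<->
    (* (1) *) (exists c : R, 0 < c /\ forall x y : V, ip2 x y = c * ip1 x y);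
    (* (2) *) (exists c : R, 0 < c /\ forall x : V, ipnorm ip2 x = c * ipnorm ip1 x);
    (* (3) *) (forall x y : V, x != 0 -> y != 0 -> ipangle ip1 x y = ipangle ip2 x y);
    (* (4) *) (forall x y : V, x != 0 -> y != 0 -> (ip1 x y = 0 <-> ip2 x y = 0));
    (* (5) *) (exists theta0 : R, 0 < theta0 < pi /\
                 forall x y : V, x != 0 -> y != 0 ->
                   (ipangle ip1 x y = theta0 <-> ipangle ip2 x y = theta0))].
Proof.
tfae.
- move=> [c [c_gt0 ip2E]]; exists (Num.sqrt c).
  by rewrite sqrtr_gt0; split=> //; apply: ipnorm_scaled.
- move=> [c [c_gt0 /(ip_scaled_of_ipnorm h1 h2) ip2E]] x y _ _.
  by apply: (ipangle_scaled h1 h2 _ ip2E); rewrite exprn_gt0.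
- move=> same_angle x y x_neq0 y_neq0.
  exact/orthogonal_iff_of_ipangle_eq/same_angle.
- move=> same_orth; have [|c [c_gt0 ip2E]] := ip_scaled_of_orthogonal h1 h2.
    by move=> x y x_neq0 y_neq0 /(same_orth x y x_neq0 y_neq0).
  exists (pi / 2); split; first by have := pi_gt0 R; lra.
  by move=> x y _ _; rewrite (ipangle_scaled h1 h2 c_gt0 ip2E).
- by move=> [th [th_in same_th]]; apply: (ip_scaled_of_ipangle_preserved h1 h2 th_in).
Qed.
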